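(* Let $n\ge1$ and let $S\in GL(4n,\mathbb{R})$ be written in $2n\times2n$ blocks as $S=\begin{pmatrix}A&B\\C&D\end{pmatrix}$. Suppose that for every real symmetric $\varGamma\in\mathbb{R}^{2n\times2n}$ the matrix $S\begin{pmatrix}\varGamma&0\\0&\varGamma\end{pmatrix}S^{T}$ is $2n\times2n$ block diagonal. Then: (i) $S$ is either (a) of the form $\begin{pmatrix}A&0\\0&D\end{pmatrix}$ or $\begin{pmatrix}0&B\\C&0\end{pmatrix}$, or (b) of the form $\begin{pmatrix}A&B\\C&D\end{pmatrix}$, where the blocks $A,B,C,D\in\mathbb{R}^{2n\times2n}$ appearing are invertible; (ii) $S\begin{pmatrix}X&0\\0&X\end{pmatrix}S^{T}$ is $2n\times2n$ block diagonal for all $X\in\mathbb{R}^{2n\times2n}$. *)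

From HB Require Import structures.
From mathcomp Require Import all_boot all_order all_algebra.
From mathcomp Require Export reals.
Set Implicit Arguments. Unset Strict Implicit. Unset Printing Implicit Defensive.
Import GRing.Theory Num.Theory.
Local Open Scope ring_scope.

Definition block_diag {R : pzRingType} (m : nat) (M : 'M[R]_(m + m)) : Prop :=
  ursubmx M = 0 /\ dlsubmx M = 0.

From HB Require Import structures.
From mathcomp Require Import all_boot all_order all_algebra.
From mathcomp Require Import reals.
Import GRing.Theory Num.Theory.
Local Open Scope ring_scope.

(* Write J := diag(1, -1) in m x m blocks; a matrix is block diagonal iff it
   commutes with J.  The hypothesis therefore says that K := S^-1 J S satisfies
   (G ⊕ G) K^T = K (G ⊕ G) for every symmetric G.  With G = 1 this gives
   K^T = K, and since symmetric matrices generate the whole matrix algebra, K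
   commutes with every X ⊕ X, so each m x m block of K is scalar.  From
   K^T = K, K^2 = 1 and tr K = tr J = 0 we get K = [[a, b], [b, -a]] ⊗ 1 with
   a^2 + b^2 = 1.  Part (ii) follows from S^T J = K S^T, and part (i) from
   reading S K = J S blockwise: if b = 0 then a = ±1 and one diagonal or
   anti-diagonal pair of blocks vanishes, while if b <> 0 each block row of S is
   of the form X [1, c] or X [c, 1]; as these rows have full rank, all four
   blocks are invertible. *)

Section MatrixAlgebra.
Context {R : pzRingType}.

Lemma delta_mulmxE m n p (i : 'I_m) (j : 'I_n) (Y : 'M[R]_(n, p)) k l :
  (delta_mx i j *m Y) k l = (k == i)%:R * Y j l.
Proof.
rewrite mxE (bigD1 j) //= big1 ?addr0; first by rewrite mxE eqxx andbT.
by move=> t /negPf tj; rewrite mxE tj andbF mul0r.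
Qed.

Lemma mulmx_deltaE m n p (i : 'I_n) (j : 'I_p) (Y : 'M[R]_(m, n)) k l :
  (Y *m delta_mx i j) k l = Y k i * (j == l)%:R.
Proof.
rewrite mxE (bigD1 i) //= big1 ?addr0; first by rewrite mxE eqxx /= eq_sym.
by move=> t /negPf ti; rewrite mxE ti /= mulr0.
Qed.

Lemma comm_mx_all_is_scalar n (Y : 'M[R]_n) :
  (forall X, comm_mx X Y) -> is_scalar_mx Y.
Proof.
case: n Y => [|n] Y cY.
  by apply/is_scalar_mxP; exists 0; rewrite [Y]flatmx0 [0%:M]flatmx0.
apply/is_scalar_mxP; exists (Y 0 0); apply/matrixP=> k l; rewrite mxE.
have Ykl : Y k l = (k == l)%:R * Y l l.
  by move: (cY (delta_mx l l)) => /matrixP/(_ k l);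
    rewrite delta_mulmxE mulmx_deltaE eqxx mulr1.
have Yll : Y 0 0 = Y l l.
  by move: (cY (delta_mx l 0)) => /matrixP/(_ l 0);
    rewrite delta_mulmxE mulmx_deltaE !eqxx mul1r mulr1.
by rewrite Ykl Yll; case: eqP; rewrite ?mul1r ?mul0r.
Qed.

Lemma mx_ind_sym m (P : 'M[R]_m -> Prop) :
  (forall X Y, P X -> P Y -> P (X + Y)) ->
  (forall a X, P X -> P (a *: X)) ->
  (forall X Y, P X -> P Y -> P (X *m Y)) ->
  (forall G, G^T = G -> P G) ->
  forall X, P X.
Proof.
move=> PD PZ PM Psym X.
have P0 : P 0 by apply: Psym; rewrite trmx0.
have Pdelta i j : P (delta_mx i j).
  have [<-|nij] := eqVneq i j; first by apply: Psym; rewrite trmx_delta.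
  have -> : delta_mx i j = delta_mx i i *m (delta_mx i j + delta_mx j i) :> 'M[R]_m.
    by rewrite mulmxDr mul_delta_mx mul_delta_mx_0 ?addr0 // eq_sym.
  by apply: PM; apply: Psym; rewrite ?trmx_delta // linearD /= !trmx_delta addrC.
rewrite (matrix_sum_delta X).
by apply: (big_ind P) => // i _; apply: (big_ind P) => // j _; apply: PZ.
Qed.

End MatrixAlgebra.

Section DuplicatedBlocks.
Context {R : comPzRingType} {m : nat}.

Lemma comm_dup_block_of_sym (K : 'M[R]_(m + m)) :
  (forall G, G^T = G -> comm_mx K (block_mx G 0 0 G)) ->
  forall X, comm_mx K (block_mx X 0 0 X).
Proof.
apply: mx_ind_sym => [X Y cX cY | a X cX | X Y cX cY].
- by rewrite -[0 : 'M_m]addr0 -add_block_mx; apply: comm_mxD.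
- by rewrite -[0 : 'M_m](scaler0 _ a) -scale_block_mx /comm_mx
    -scalemxAl -scalemxAr cX.
- have -> : block_mx (X *m Y) 0 0 (X *m Y) = block_mx X 0 0 X *m block_mx Y 0 0 Y.
    by rewrite mulmx_block !mulmx0 !mul0mx !addr0 !add0r.
  exact: comm_mxM.
Qed.

Lemma comm_dup_block_scalar (K : 'M[R]_(m + m)) :
  (forall X, comm_mx K (block_mx X 0 0 X)) ->
  exists a b c d, K = block_mx a%:M b%:M c%:M d%:M.
Proof.
rewrite -[K]submxK; move: (ulsubmx K) (ursubmx K) (dlsubmx K) (drsubmx K).
move=> K1 K2 K3 K4 cK.
have cKX X : [/\ comm_mx X K1, comm_mx X K2, comm_mx X K3 & comm_mx X K4].
  move: (cK X); rewrite /comm_mx !mulmx_block !mulmx0 !mul0mx !addr0 !add0r.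
  by case/eq_block_mx.
have scalar (Y : 'M[R]_m) : (forall X, comm_mx X Y) -> exists a, Y = a%:M.
  by move/comm_mx_all_is_scalar/is_scalar_mxP.
case: (all_and4 cKX) => /scalar[a ->] /scalar[b ->] /scalar[c ->] /scalar[d ->].
by exists a, b, c, d.
Qed.

End DuplicatedBlocks.

Definition sign_block_mx (R : pzRingType) m : 'M[R]_(m + m) :=
  block_mx 1%:M 0 0 (- 1%:M).

Section SignBlock.
Context {R : pzRingType} {m : nat}.
Local Notation J := (sign_block_mx R m).

Lemma tr_sign_block_mx : J^T = J.
Proof. by rewrite tr_block_mx !trmx0 linearN /= tr_scalar_mx. Qed.

Lemma sign_block_mx_invol : J *m J = 1%:M.
Proof.
rewrite mulmx_block !mulmx0 !mul0mx !addr0 !add0r mulmx1 mulmxN mulmx1 opprK.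
by rewrite -scalar_mx_block.
Qed.

Lemma mxtrace_sign_block_mx : \tr J = 0.
Proof. by rewrite mxtrace_block linearN /= subrr. Qed.

End SignBlock.

Lemma oppmx_eq_self (R : numDomainType) m n (M : 'M[R]_(m, n)) : - M = M -> M = 0.
Proof.
move=> NM; apply/matrixP=> i j; move/matrixP/(_ i j): NM.
by rewrite !mxE => /eqP; rewrite eqNr => /eqP.
Qed.

Lemma block_diagP (R : numDomainType) m (M : 'M[R]_(m + m)) :
  block_diag M <-> comm_mx M (sign_block_mx R m).
Proof.
rewrite /block_diag /comm_mx /sign_block_mx -[M]submxK !mulmx_block.
rewrite !mulmx0 !mul0mx !mulmx1 !mul1mx !mulmxN !mulNmx !mulmx1 !mul1mx !addr0 !add0r.
rewrite block_mxKur block_mxKdl; split=> [[-> ->] | /eq_block_mx[_ ur dl _]].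
  by rewrite !oppr0.
by split; apply: oppmx_eq_self.
Qed.

Lemma row_free_col_mx (F : fieldType) m1 m2 n (U : 'M[F]_(m1, n)) (L : 'M[F]_(m2, n)) :
  row_free (col_mx U L) -> row_free U /\ row_free L.
Proof.
move=> freeUL; split; apply: inj_row_free => v vM0.
  have : row_mx v 0 *m col_mx U L = 0 by rewrite mul_row_col vM0 mul0mx addr0.
  by move/eqP; rewrite mulmx_free_eq0 // -row_mx0 => /eqP/eq_row_mx[].
have : row_mx 0 v *m col_mx U L = 0 by rewrite mul_row_col vM0 mul0mx addr0.
by move/eqP; rewrite mulmx_free_eq0 // -row_mx0 => /eqP/eq_row_mx[].
Qed.

Lemma row_free_mulmx_unitl (F : fieldType) m p (X : 'M[F]_m) (Y : 'M[F]_(m, p)) :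
  row_free (X *m Y) -> X \in unitmx.
Proof.
by rewrite -row_free_unit -!row_leq_rank => /leq_trans; apply; apply: mxrankM_maxl.
Qed.

Lemma row_free_row_mx_scalel (F : fieldType) m (X : 'M[F]_m) c :
  row_free (row_mx (c *: X) X) -> X \in unitmx.
Proof.
by rewrite -[X in row_mx _ X]mulmx1 -mul_mx_scalar -mul_mx_row; apply: row_free_mulmx_unitl.
Qed.

Lemma row_free_row_mx_scaler (F : fieldType) m (X : 'M[F]_m) c :
  row_free (row_mx X (c *: X)) -> X \in unitmx.
Proof.
by rewrite -[X in row_mx X _]mulmx1 -mul_mx_scalar -mul_mx_row; apply: row_free_mulmx_unitl.
Qed.

Lemma row_free_lincomb_unitl (F : fieldType) m (X Y : 'M[F]_m) a b :
  row_free (row_mx X Y) -> a *: X + b *: Y = 0 -> b != 0 -> X \in unitmx.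
Proof.
move=> freeXY abXY b_neq0; apply: (@row_free_row_mx_scaler _ _ _ (- (b^-1 * a))).
have bY : b *: Y = - (a *: X) by apply/eqP; rewrite -addr_eq0 addrC abXY.
by rewrite scaleNr -scalerA -scalerN -bY scalerK.
Qed.

Lemma row_free_lincomb_unitr (F : fieldType) m (X Y : 'M[F]_m) a b :
  row_free (row_mx X Y) -> a *: X + b *: Y = 0 -> a != 0 -> Y \in unitmx.
Proof.
move=> freeXY abXY a_neq0; apply: (@row_free_row_mx_scalel _ _ _ (- (a^-1 * b))).
have aX : a *: X = - (b *: Y) by apply/eqP; rewrite -addr_eq0 abXY.
by rewrite scaleNr -scalerA -scalerN -aX scalerK.
Qed.

Section BlockDiagonalCongruence.
Context {R : numFieldType} {m : nat} {A B C D : 'M[R]_m}.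
Local Notation S := (block_mx A B C D).
Local Notation J := (sign_block_mx R m).
Hypothesis S_unit : S \in unitmx.
Hypothesis S_congr_sym : forall G : 'M[R]_m, G^T = G ->
  block_diag (S *m block_mx G 0 0 G *m S^T).

Definition sign_conj := invmx S *m J *m S.
Local Notation K := sign_conj.

Lemma mulmx_sign_conj : S *m K = J *m S.
Proof. by rewrite /sign_conj !mulmxA mulmxV // mul1mx. Qed.

Lemma tr_sign_conjE : K^T = S^T *m J *m invmx S^T.
Proof. by rewrite /sign_conj !trmx_mul trmx_inv tr_sign_block_mx mulmxA. Qed.

Lemma sign_conj_invol : K *m K = 1%:M.
Proof.
by rewrite /sign_conj !mulmxA mulmxK // -(mulmxA _ J J) sign_block_mx_invol mulmx1 mulVmx.
Qed.

Lemma mxtrace_sign_conj : \tr K = 0.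
Proof.
by rewrite /sign_conj mxtrace_mulC !mulmxA mulmxV // mul1mx mxtrace_sign_block_mx.
Qed.

Lemma dup_block_mulmx_tr_sign_conj G : G^T = G ->
  block_mx G 0 0 G *m K^T = K *m block_mx G 0 0 G.
Proof.
move=> /S_congr_sym/block_diagP commJ; rewrite tr_sign_conjE.
transitivity (invmx S *m (S *m block_mx G 0 0 G *m S^T *m J) *m invmx S^T).
  by rewrite !mulmxA mulVmx // mul1mx.
by rewrite commJ /sign_conj !mulmxA -(mulmxA _ S^T) mulmxV ?unitmx_tr // mulmx1.
Qed.

Lemma tr_sign_conj : K^T = K.
Proof.
by have := dup_block_mulmx_tr_sign_conj _ (tr_scalar_mx m 1); rewrite -scalar_mx_block mul1mx mulmx1.
Qed.

Lemma comm_sign_conj_dup_block X : comm_mx K (block_mx X 0 0 X).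
Proof.
apply: comm_dup_block_of_sym => G /dup_block_mulmx_tr_sign_conj.
by rewrite tr_sign_conj.
Qed.

Lemma block_diag_congr_dup X : block_diag (S *m block_mx X 0 0 X *m S^T).
Proof.
have SJ : S^T *m J = K *m S^T.
  by rewrite -tr_sign_conj tr_sign_conjE mulmxKV ?unitmx_tr.
apply/block_diagP; rewrite /comm_mx -!mulmxA SJ (mulmxA _ K) -(comm_sign_conj_dup_block X).
by rewrite -mulmxA [S *m (K *m _)]mulmxA mulmx_sign_conj -!mulmxA.
Qed.

Hypothesis m_gt0 : (0 < m)%N.

Lemma sign_conj_blocks : exists a b,
  a ^+ 2 + b ^+ 2 = 1 /\ K = block_mx a%:M b%:M b%:M (- a)%:M.
Proof.
have scalar_inj x y : x%:M = y%:M :> 'M[R]_m -> x = y.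
  by move/matrixP/(_ (Ordinal m_gt0) (Ordinal m_gt0)); rewrite !mxE eqxx.
have [a [b [c [d eK]]]] := comm_dup_block_scalar _ comm_sign_conj_dup_block.
have cb : c = b.
  move: tr_sign_conj; rewrite eK tr_block_mx !tr_scalar_mx => /eq_block_mx[_ _ cb _].
  exact: scalar_inj.
have da : d = - a.
  move: mxtrace_sign_conj; rewrite eK mxtrace_block !mxtrace_scalar -mulrnDl => /eqP.
  by rewrite mulrn_eq0 eqn0Ngt m_gt0 /= addrC addr_eq0 => /eqP.
exists a, b; split; last by rewrite eK cb da.
move: sign_conj_invol; rewrite eK mulmx_block [1%:M]scalar_mx_block => /eq_block_mx[+ _ _ _].
by rewrite -!scalar_mxM -raddfD /= cb -!expr2 => /scalar_inj.
Qed.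

Lemma mulmx_sign_conj_blocks : exists a b, [/\ a ^+ 2 + b ^+ 2 = 1,
  a *: A + b *: B = A, b *: A - a *: B = B,
  a *: C + b *: D = - C & b *: C - a *: D = - D].
Proof.
have [a [b [ab1 eK]]] := sign_conj_blocks.
exists a, b; move: mulmx_sign_conj; rewrite eK /sign_block_mx !mulmx_block !mul_mx_scalar.
rewrite !mul0mx !mul1mx !mulNmx !mul1mx !addr0 !add0r !scaleNr.
by case/eq_block_mx.
Qed.

Lemma block_mx_zero_or_unit :
  (B = 0 /\ C = 0 /\ A \in unitmx /\ D \in unitmx)
  \/ (A = 0 /\ D = 0 /\ B \in unitmx /\ C \in unitmx)
  \/ (A \in unitmx /\ B \in unitmx /\ C \in unitmx /\ D \in unitmx).
Proof.
have [a [b [ab1 eA eB eC eD]]] := mulmx_sign_conj_blocks.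
have [freeAB freeCD] : row_free (row_mx A B) /\ row_free (row_mx C D).
  by apply: row_free_col_mx; rewrite -block_mxEv row_free_unit.
have [b0 | b_neq0] := eqVneq b 0.
  move: ab1 eA eB eC eD; rewrite b0 !scale0r expr0n addr0 !add0r => /eqP.
  rewrite sqrf_eq1 => /orP[] /eqP-> eA eB eC eD.
    have B0 : B = 0 by apply: oppmx_eq_self; move: eB; rewrite scale1r.
    have C0 : C = 0 by apply: oppmx_eq_self; rewrite -eC scale1r addr0.
    left; do !split=> //.
      by move: freeAB; rewrite B0 -(scale0r A) => /row_free_row_mx_scaler.
    by move: freeCD; rewrite C0 -(scale0r D) => /row_free_row_mx_scalel.
  have A0 : A = 0 by apply: oppmx_eq_self; move: eA; rewrite scaleN1r addr0.
  have D0 : D = 0 by apply: oppmx_eq_self; rewrite -eD scaleN1r opprK.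
  right; left; do !split=> //.
    by move: freeAB; rewrite A0 -(scale0r B) => /row_free_row_mx_scalel.
  by move: freeCD; rewrite D0 -(scale0r C) => /row_free_row_mx_scaler.
right; right; do !split.
- apply: (@row_free_lincomb_unitl _ _ A B (a - 1) b freeAB _ b_neq0).
  by rewrite scalerBl scale1r addrAC eA subrr.
- apply: (@row_free_lincomb_unitr _ _ A B b (- (1 + a)) freeAB _ b_neq0).
  by rewrite scaleNr scalerDl scale1r opprD addrA addrAC eB subrr.
- apply: (@row_free_lincomb_unitl _ _ C D (1 + a) b freeCD _ b_neq0).
  by rewrite scalerDl scale1r -addrA eC subrr.
- apply: (@row_free_lincomb_unitr _ _ C D b (1 - a) freeCD _ b_neq0).
  by rewrite scalerBl scale1r addrA addrAC eD addNr.
Qed.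

End BlockDiagonalCongruence.

Theorem lemma5 (R : realType) (n : nat) (hn : (0 < n)%N)
  (A B C D : 'M[R]_(2 * n))
  (hS : block_mx A B C D \in unitmx)
  (hyp : forall G : 'M[R]_(2 * n), G^T = G ->
     block_diag (block_mx A B C D *m block_mx G 0 0 G *m (block_mx A B C D)^T)) :
  ((B = 0 /\ C = 0 /\ A \in unitmx /\ D \in unitmx)
   \/ (A = 0 /\ D = 0 /\ B \in unitmx /\ C \in unitmx)
   \/ (A \in unitmx /\ B \in unitmx /\ C \in unitmx /\ D \in unitmx))
  /\ (forall X : 'M[R]_(2 * n),
     block_diag (block_mx A B C D *m block_mx X 0 0 X *m (block_mx A B C D)^T)).
Proof.
have m_gt0 : (0 < 2 * n)%N by rewrite muln_gt0 hn.
by split; [exact: block_mx_zero_or_unit | exact: block_diag_congr_dup].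
Qed.
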